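(* Let $S,T\subseteq[r]$. If $S$ dominates $T$, then $T\subseteq S$.
   Context: For $\pi=a_1\cdots a_{r+1}\in S_{r+1}$, its descent set is $\{i\in[r]:a_i>a_{i+1}\}$, and $D(S)$ is the set of permutations in $S_{r+1}$ with descent set $S$. The inversion set is $I(\pi)=\{(a_i,a_j):i<j,\ a_i>a_j\}$; $\pi\le_w\pi'$ iff $I(\pi)\subseteq I(\pi')$ (weak Bruhat order). $S$ dominates $T$ if there is an injection $\phi:D(T)\to D(S)$ with $\pi\le_w\phi(\pi)$ for all $\pi\in D(T)$. *)

From mathcomp Require Import all_boot all_fingroup.
Set Implicit Arguments. Unset Strict Implicit. Unset Printing Implicit Defensive.

(* Permutations of [r+1] are 'S_(r.+1) (acting on 'I_(r.+1) = {0,...,r}).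
   A permutation s is the word a_1 ... a_{r+1} with a_k = s (k-1).
   Positions of [r] = {1,...,r} are encoded by i : 'I_r, i standing for i+1. *)

Definition posL r (i : 'I_r) : 'I_r.+1 := widen_ord (leqnSn r) i.
Definition posR r (i : 'I_r) : 'I_r.+1 := lift ord0 i.

Definition descent_set r (s : 'S_r.+1) : {set 'I_r} :=
  [set i : 'I_r | s (posR i) < s (posL i)].

Definition Dset r (S : {set 'I_r}) : {set 'S_r.+1} :=
  [set s : 'S_r.+1 | descent_set s == S].

Definition inv_set n (s : 'S_n) : {set 'I_n * 'I_n} :=
  [set x : 'I_n * 'I_n |
     [exists i : 'I_n, exists j : 'I_n,
        [&& i < j, s j < s i & x == (s i, s j)]]].

Definition weak_le n (s t : 'S_n) : bool := inv_set s \subset inv_set t.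

Definition dominates r (S T : {set 'I_r}) : Prop :=
  exists phi : 'S_r.+1 -> 'S_r.+1,
    [/\ {in Dset T &, injective phi},
        {in Dset T, forall pi, phi pi \in Dset S} &
        {in Dset T, forall pi, weak_le pi (phi pi)}].

From mathcomp Require Import all_boot all_fingroup.
From mathcomp Require Import zify.

Set Implicit Arguments. Unset Strict Implicit. Unset Printing Implicit Defensive.

(* Let pi be the element of D(T) that arranges the ascending runs of the
   positions in decreasing order of values.  For t in T, pi puts the t+1 largest
   values X in its first t+1 positions, so (x, y) is an inversion of pi whenever
   x is in X and y is not.  If pi <=_w sigma with sigma in D(S), these
   inversions persist, so sigma too places all of X before its complement;
   counting, sigma fills its first t+1 positions with X, and hence has a descent
   at t.  Only the existence of phi(pi) is used, not the injectivity of phi. *)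

Section RankPermutation.
Variables (n : nat) (f : 'I_n -> nat).
Hypothesis f_inj : injective f.

Definition rank_of (p : 'I_n) : nat := #|[set q | f q < f p]|.

Lemma ltn_rank_of p q : (rank_of p < rank_of q) = (f p < f q).
Proof.
case: (ltnP (f p) (f q)) => [lt_pq | le_qp].
  apply: proper_card; apply/properP; split.
    by apply/subsetP => x; rewrite !inE => /ltn_trans; apply.
  by exists p; rewrite !inE ?ltnn.
apply/negbTE; rewrite -leqNgt; apply: subset_leq_card.
by apply/subsetP => x; rewrite !inE => /leq_trans; apply.
Qed.

Lemma rank_of_ltn p : rank_of p < n.
Proof.
rewrite -[n in _ < n]card_ord; apply: proper_card; apply/properP; split.
  exact: subset_predT.
by exists p; rewrite ?inE ?ltnn.
Qed.

Definition rank_ord (p : 'I_n) : 'I_n := Ordinal (rank_of_ltn p).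

Lemma rank_ord_inj : injective rank_ord.
Proof.
move=> p q /(congr1 val) /= eq_rank; apply: f_inj; apply/eqP.
rewrite eqn_leq leqNgt [f q <= _]leqNgt -!ltn_rank_of eq_rank.
by rewrite ltnn.
Qed.

Definition rank_perm : 'S_n := perm rank_ord_inj.

Lemma ltn_rank_perm p q : (rank_perm p < rank_perm q) = (f p < f q).
Proof. by rewrite !permE ltn_rank_of. Qed.

End RankPermutation.

Definition splits_at n (s : 'S_n) (k : nat) : Prop :=
  forall p q : 'I_n, p < k <= q -> s q < s p.

Section BlockPermutation.
Variables (r : nat) (T : {set 'I_r}).

Definition descents_after (p : 'I_r.+1) : nat := #|[set j in T | p <= j]|.

Lemma descents_after_sep (p q : 'I_r.+1) (t : 'I_r) :
  t \in T -> p <= t < q -> descents_after q < descents_after p.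
Proof.
move=> tT /andP[le_pt lt_tq]; apply: proper_card; apply/properP; split.
  by apply/subsetP => j; rewrite !inE => /andP[-> le_qj] /=; lia.
by exists t; rewrite !inE tT /=; lia.
Qed.

Lemma descents_after_run (i : 'I_r) :
  i \notin T -> descents_after (posR i) = descents_after (posL i).
Proof.
move=> iT; apply: eq_card => j; rewrite !inE /= /bump /= add1n.
case jT: (j \in T) => //=; rewrite [i <= j]leq_eqVlt; case: eqP => //= eq_ij.
by move: iT; rewrite (val_inj eq_ij) jT.
Qed.

(* Lexicographic in (descents_after p, p): later runs get smaller keys, and
   positions within a run are increasing. *)
Definition block_key (p : 'I_r.+1) : nat := descents_after p * r.+1 + p.

Lemma block_key_lt (p q : 'I_r.+1) :
  descents_after q < descents_after p -> block_key q < block_key p.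
Proof. by move=> lt_d; have := ltn_ord q; rewrite /block_key; nia. Qed.

Lemma block_key_inj : injective block_key.
Proof.
move=> p q eq_key; case: (ltngtP (descents_after p) (descents_after q)).
- by move/block_key_lt; rewrite eq_key ltnn.
- by move/block_key_lt; rewrite eq_key ltnn.
- by move=> eq_d; apply: val_inj; move: eq_key; rewrite /block_key eq_d => /addnI.
Qed.

Definition block_perm : 'S_r.+1 := rank_perm block_key_inj.

Lemma block_perm_Dset : block_perm \in Dset T.
Proof.
rewrite inE; apply/eqP/setP => i; rewrite inE ltn_rank_perm.
case: (boolP (i \in T)) => iT.
  by apply: block_key_lt; apply: (descents_after_sep iT); rewrite /= /bump /=; lia.
by rewrite /block_key descents_after_run // ltn_add2l /= /bump /=; lia.
Qed.

Lemma block_perm_splits_at (t : 'I_r) : t \in T -> splits_at block_perm t.+1.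
Proof.
move=> tT p q /andP[lt_pt le_tq]; rewrite ltn_rank_perm.
by apply/block_key_lt/(descents_after_sep tT); rewrite -ltnS lt_pt.
Qed.

End BlockPermutation.

Lemma mem_inv_set n (s : 'S_n) (x y : 'I_n) :
  ((x, y) \in inv_set s) = ((s^-1)%g x < (s^-1)%g y) && (y < x).
Proof.
rewrite inE; apply/existsP/andP.
  by case=> i /existsP[j /and3P[lt_ij lt_s /eqP[-> ->]]]; rewrite !permK.
case=> lt_inv lt_yx; exists ((s^-1)%g x); apply/existsP; exists ((s^-1)%g y).
by rewrite lt_inv !permKV lt_yx eqxx.
Qed.

Definition down_closed n (A : {set 'I_n}) : Prop :=
  forall p q : 'I_n, p < q -> q \in A -> p \in A.

Lemma down_closed_subset_or n (A B : {set 'I_n}) :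
  down_closed A -> down_closed B -> A \subset B \/ B \subset A.
Proof.
move=> dA dB; case: (boolP (A \subset B)) => [|/subsetPn[a aA aB]]; [by left|right].
apply/subsetP => b bB; case: (ltngtP b a) => [lt_ba|lt_ab|eq_ab].
- exact: dA lt_ba aA.
- by case/negP: aB; apply: dB lt_ab bB.
- by rewrite (val_inj eq_ab).
Qed.

Lemma down_closed_eq n (A B : {set 'I_n}) :
  down_closed A -> down_closed B -> #|A| = #|B| -> A = B.
Proof.
move=> dA dB cardAB; apply/setP.
by case: (down_closed_subset_or dA dB) => [|sBA x];
  [apply/subset_cardP | apply/esym/subset_cardP].
Qed.

Lemma weak_le_splits_at n (s t : 'S_n) (k : nat) :
  weak_le s t -> splits_at s k -> splits_at t k.
Proof.
move=> /subsetP le_st split_s.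
pose X := [set x | (s^-1)%g x < k].
have split_inv x y : x \in X -> y \notin X -> y < x.
  rewrite !inE -leqNgt => ltx gey.
  by rewrite -(permKV s x) -(permKV s y) split_s // ltx.
have before_t x y : x \in X -> y \notin X -> (t^-1)%g x < (t^-1)%g y.
  move=> Xx Xy; have /le_st : (x, y) \in inv_set s.
    rewrite mem_inv_set (split_inv x y) // andbT.
    by move: Xx Xy; rewrite !inE -leqNgt; apply: leq_trans.
  by rewrite mem_inv_set => /andP[].
have dt : down_closed (t @^-1: X).
  move=> p q lt_pq; rewrite [q \in _]inE [p \in _]inE => Xq.
  apply/negPn/negP => Xp.
  by move: (before_t _ _ Xq Xp); rewrite !permK ltnNge ltnW.
have ds : down_closed (s @^-1: X).
  by move=> p q lt_pq; rewrite !inE !permK => /(ltn_trans lt_pq).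
have eq_pre : t @^-1: X = s @^-1: X.
  apply: down_closed_eq => //.
  by rewrite !card_preimset //; apply: perm_inj.
move=> p q /andP[lt_pk le_kq]; apply: split_inv.
  have : p \in s @^-1: X by rewrite !inE permK.
  by rewrite -eq_pre inE.
have : q \notin s @^-1: X by rewrite !inE permK -leqNgt.
by rewrite -eq_pre inE.
Qed.

Lemma splits_at_descent r (s : 'S_r.+1) (i : 'I_r) :
  splits_at s i.+1 -> i \in descent_set s.
Proof. by move=> split_s; rewrite inE; apply: split_s; rewrite /= /bump /=; lia. Qed.


Theorem proposition5p4 (r : nat) (S T : {set 'I_r}) :
  dominates S T -> T \subset S.
Proof.
move=> [phi [_ phi_D phi_le]]; apply/subsetP => t tT.
have piT := block_perm_Dset T.
have /phi_D := piT; rewrite inE => /eqP <-.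
apply/splits_at_descent/(weak_le_splits_at (phi_le _ piT)).
exact: block_perm_splits_at.
Qed.
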